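(* Let $\mathcal G$ be a connected signed graph with normalized signed Laplacian $\mathcal L$. If $\mathcal G$ is structurally unbalanced, then $\lambda_2(\mathcal L)<1$.
   Context: Let $\mathcal G$ be an undirected, connected signed graph on $n$ nodes without self-loops, with symmetric adjacency matrix $A=[a_{ij}]$ having zero diagonal and entries of either sign, where $a_{ij}\ne0$ iff $\{i,j\}$ is an edge. Let $\delta_i=\sum_j|a_{ij}|>0$ and $\Delta=\mathrm{diag}(\delta_i)$. The normalized signed Laplacian is $\mathcal L=I-\Delta^{-1}A$; its eigenvalues are real and ordered $\lambda_1(\mathcal L)\le\dots\le\lambda_n(\mathcal L)$. $\mathcal G$ is structurally balanced if there is a signature matrix $S=\mathrm{diag}(s_i)$, $s_i=\pm1$, such that $SAS$ is entrywise nonnegative; otherwise it is structurally unbalanced. *)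

From HB Require Import structures.
From mathcomp Require Import all_boot all_order all_algebra.
From mathcomp Require Import reals.
Set Implicit Arguments. Unset Strict Implicit. Unset Printing Implicit Defensive.
Import Order.TTheory GRing.Theory Num.Theory.
Local Open Scope ring_scope.

Section SignedGraph.
Variables (R : realType) (n : nat).

Definition sdeg (A : 'M[R]_n) (i : 'I_n) : R := \sum_j `|A i j|.

Definition sDelta (A : 'M[R]_n) : 'M[R]_n := diag_mx (\row_i sdeg A i).

Definition norm_signed_laplacian (A : 'M[R]_n) : 'M[R]_n :=
  1%:M - invmx (sDelta A) *m A.

Definition sg_connected (A : 'M[R]_n) : Prop :=
  forall i j : 'I_n, connect (fun k l => A k l != 0) i j.

Definition signature_mx (S : 'M[R]_n) : Prop :=
  exists s : 'I_n -> bool, S = diag_mx (\row_i (-1) ^+ s i).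

Definition struct_balanced (A : 'M[R]_n) : Prop :=
  exists S : 'M[R]_n, signature_mx S /\ forall i j, 0 <= (S *m A *m S) i j.

(* s is the list of eigenvalues of M (with algebraic multiplicity),
   ordered increasingly: s`_0 = lambda_1 <= s`_1 = lambda_2 <= ... *)
Definition sorted_spectrum (M : 'M[R]_n) (s : seq R) : Prop :=
  sorted <=%R s /\ char_poly M = \prod_(x <- s) ('X - x%:P).

End SignedGraph.

From HB Require Import structures.
From mathcomp Require Import all_boot all_order all_algebra.
From mathcomp Require Import reals.
From mathcomp Require Import complex spectral ring lra.
Set Implicit Arguments. Unset Strict Implicit. Unset Printing Implicit Defensive.
Import Order.TTheory GRing.Theory Num.Theory.
Local Open Scope ring_scope.

(* Put e_i = sqrt(delta_i) and let B = E^-1 A E^-1 (E = diag e) be the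
   symmetrically normalized adjacency matrix.  Then E L E^-1 = I - B, so L has
   the spectrum of the real symmetric matrix M = I - B.  Diagonalizing M
   unitarily over R[i] (mathcomp's spectral theorem) gives real eigenvalues.
   If lambda_2 >= 1, at most one eigenvalue of M lies below 1; expanding the
   quadratic form of B = I - M in the eigenbasis then yields
   y B y^T <= c (v.y)^2 for all y, with v a real eigenvector of the smallest
   eigenvalue.  Testing this bound on vectors supported by two vertices i, j
   shows that w_i = e_i v_i is nonzero at both ends of every edge and that
   a_ij w_i w_j >= 0; hence the signs of w form a balancing signature. *)

(* A real number a with  2 t a <= c (x + t y)^2  for all t: the pattern
   produced by evaluating a rank-one bound on a two-point vector. *)
Section TwoPointInequality.
Variables (R : realFieldType) (a c x y : R).
Hypothesis bound : forall t : R, 2 * t * a <= c * (x + t * y) ^+ 2.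

(* If y = 0 the right-hand side is constant in t, so a must vanish. *)
Lemma two_point_nonzero : a != 0 -> y != 0.
Proof.
move=> a0; apply/eqP => y0.
have := bound ((c * x ^+ 2 + 1) / (2 * a)).
rewrite y0 mulr0 addr0.
have -> : 2 * ((c * x ^+ 2 + 1) / (2 * a)) * a = c * x ^+ 2 + 1 by field.
by move: (c * x ^+ 2) => u; lra.
Qed.

(* At t = -x/y the right-hand side vanishes, which fixes the sign of a x y. *)
Lemma two_point_sign : y != 0 -> 0 <= a * x * y.
Proof.
move=> y0; have := bound (- x / y).
have -> : x + - x / y * y = 0 by field.
rewrite expr0n /= mulr0 => le0.
have ysq : 0 < y ^+ 2 by rewrite exprn_even_gt0.
rewrite -(pmulr_rge0 _ (ltr0n R 2)) -(pmulr_lge0 _ ysq).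
have -> : 2 * (a * x * y) * y ^+ 2 = - (2 * (- x / y) * a) * y ^+ 4 by field.
by rewrite mulr_ge0 // ?oppr_ge0 // exprn_even_ge0.
Qed.

End TwoPointInequality.

Section TwoPointVectors.
Variables (R : comNzRingType) (n : nat).

Let entryD (M N : 'M[R]_1) : (M + N) 0 0 = M 0 0 + N 0 0. Proof. by rewrite mxE. Qed.
Let entryZ a (M : 'M[R]_1) : (a *: M) 0 0 = a * M 0 0. Proof. by rewrite mxE. Qed.

Definition two_point (i j : 'I_n) (a b : R) : 'rV[R]_n :=
  a *: delta_mx 0 i + b *: delta_mx 0 j.

Lemma lin_two_point (s : 'rV[R]_n) i j a b :
  (s *m (two_point i j a b)^T) 0 0 = a * s 0 i + b * s 0 j.
Proof.
have row_delta k : (s *m (delta_mx 0 k : 'rV_n)^T) 0 0 = s 0 k.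
  by rewrite trmx_delta -colE !mxE.
rewrite /two_point linearD /= !linearZ /= mulmxDr -!scalemxAr.
by rewrite entryD !entryZ !row_delta.
Qed.

Lemma quad_two_point (B : 'M[R]_n) i j a b :
  let y := two_point i j a b in
  (y *m B *m y^T) 0 0 = a * a * B i i + a * b * B i j + b * a * B j i + b * b * B j j.
Proof.
have entry k l : ((delta_mx 0 k : 'rV_n) *m B *m (delta_mx 0 l : 'rV_n)^T) 0 0 = B k l.
  by rewrite trmx_delta -rowE -colE !mxE.
rewrite /= /two_point linearD /= !linearZ /= !mulmxDl !mulmxDr.
rewrite -!scalemxAl -!scalemxAr !addrA !entryD !entryZ !entry; ring.
Qed.

End TwoPointVectors.

Lemma signature_mul (R : realDomainType) (x : R) : (-1) ^+ (x < 0)%R * x = `|x|.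
Proof.
case: (ltrP x 0) => hx /=; first by rewrite expr1 mulN1r ltr0_norm.
by rewrite expr0 mul1r ger0_norm.
Qed.

Lemma balanced_of_sign_pattern (R : realType) n (A : 'M[R]_n) (w : 'I_n -> R) :
  (forall i j, A i j != 0 -> [/\ w i != 0, w j != 0 & 0 <= A i j * w i * w j]) ->
  struct_balanced A.
Proof.
move=> sign_ok; pose sigma i := (w i < 0)%R.
exists (diag_mx (\row_i (-1) ^+ sigma i)); split; first by exists sigma.
move=> i j; rewrite mul_mx_diag mul_diag_mx !mxE.
have [->|Aij] := eqVneq (A i j) 0; first by rewrite mulr0 mul0r.
have [wi0 wj0 Aww] := sign_ok i j Aij.
have pos : 0 < `|w i| * `|w j| by rewrite mulr_gt0 // normr_gt0.
rewrite -(pmulr_lge0 _ pos) -!signature_mul.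
have -> : (-1) ^+ sigma i * A i j * (-1) ^+ sigma j *
    ((-1) ^+ sigma i * w i * ((-1) ^+ sigma j * w j)) =
  ((-1) ^+ sigma i) ^+ 2 * ((-1) ^+ sigma j) ^+ 2 * (A i j * w i * w j) by ring.
by rewrite !sqrr_sign !mul1r.
Qed.

Definition sym_normalized (R : fieldType) n (A : 'M[R]_n) (e : 'I_n -> R) : 'M[R]_n :=
  \matrix_(i, j) (A i j / (e i * e j)).

Section BalanceFromRankOneBound.
Variables (R : realType) (n : nat) (A : 'M[R]_n) (e : 'I_n -> R) (c : R) (s : 'rV[R]_n).
Hypotheses (Asym : A^T = A) (Adiag : forall i, A i i = 0) (epos : forall i, 0 < e i).
Hypothesis bound : forall y : 'rV[R]_n,
  (y *m sym_normalized A e *m y^T) 0 0 <= c * ((s *m y^T) 0 0) ^+ 2.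

Let w i := e i * s 0 i.

Let A_swap i j : A j i = A i j. Proof. by rewrite -[in LHS]Asym mxE. Qed.

Lemma edge_bound i j : i != j ->
  forall t, 2 * t * A i j <= c * (w i + t * w j) ^+ 2.
Proof.
move=> ij t; have := bound (two_point i j (e i) (t * e j)).
have ei0 : e i != 0 by rewrite gt_eqF.
have ej0 : e j != 0 by rewrite gt_eqF.
rewrite quad_two_point lin_two_point !mxE !Adiag (A_swap i j).
set q := (X in X <= _); have -> : q = 2 * t * A i j.
  by rewrite /q; field; rewrite ei0 ej0.
by rewrite /w mulrA.
Qed.

Lemma balanced_of_rank_one_bound : struct_balanced A.
Proof.
apply: (balanced_of_sign_pattern (w := w)) => i j Aij.
have ij : i != j by apply: contraNneq Aij => ->; rewrite Adiag.
have ji : j != i by rewrite eq_sym.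
have Aji : A j i != 0 by rewrite A_swap.
have wj0 := two_point_nonzero (edge_bound ij) Aij.
have wi0 := two_point_nonzero (edge_bound ji) Aji.
by split => //; apply: two_point_sign (edge_bound ij) wj0.
Qed.

End BalanceFromRankOneBound.

Lemma char_poly_similar (F : fieldType) n (P Q A : 'M[F]_n) :
  P \in unitmx -> P *m Q = A *m P -> char_poly Q = char_poly A.
Proof.
move=> Pu PQ.
have E : map_mx polyC P *m char_poly_mx Q = char_poly_mx A *m map_mx polyC P.
  rewrite /char_poly_mx mulmxBr mulmxBl mul_mx_scalar mul_scalar_mx.
  by rewrite -!map_mxM PQ.
have := congr1 determinant E; rewrite !det_mulmx det_map_mx mulrC.
by move/mulIf; apply; rewrite polyC_eq0 -unitfE -unitmxE.
Qed.

Lemma char_poly_diag (F : comNzRingType) n (d : 'rV[F]_n) :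
  char_poly (diag_mx d) = \prod_(i < n) ('X - (d 0 i)%:P).
Proof.
rewrite char_poly_trig ?diag_mx_is_trig //.
by apply: eq_bigr => i _; rewrite mxE eqxx mulr1n.
Qed.

Lemma diag_mx_invl (F : fieldType) n (d : 'rV[F]_n) : (forall i, d 0 i != 0) ->
  diag_mx d *m diag_mx (\row_i (d 0 i)^-1) = 1%:M.
Proof.
move=> d_nz; apply/matrixP => i j; rewrite mul_diag_mx !mxE.
by case: eqP => [->|_]; rewrite ?mulr1n ?mulr0n ?mulr0 // divff.
Qed.

Lemma diag_mx_unit (F : fieldType) n (d : 'rV[F]_n) :
  (forall i, d 0 i != 0) -> diag_mx d \in unitmx.
Proof. by move/diag_mx_invl/mulmx1_unit => []. Qed.

Lemma invmx_diag (F : fieldType) n (d : 'rV[F]_n) : (forall i, d 0 i != 0) ->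
  invmx (diag_mx d) = diag_mx (\row_i (d 0 i)^-1).
Proof.
move=> d_nz; rewrite -[RHS](mulKmx (diag_mx_unit d_nz)).
by rewrite diag_mx_invl // mulmx1.
Qed.

(* If e_i^2 = delta_i, then E L = (I - E^-1 A E^-1) E: the normalized signed
   Laplacian is similar to a symmetric matrix. *)
Lemma laplacian_similar (R : realType) n (A : 'M[R]_n) (e : 'I_n -> R) :
  (forall i, e i != 0) -> (forall i, e i ^+ 2 = sdeg A i) ->
  char_poly (norm_signed_laplacian A) = char_poly (1%:M - sym_normalized A e).
Proof.
move=> e_nz e_sq.
have deg_nz i : (\row_k sdeg A k) 0 i != 0 by rewrite mxE -e_sq expf_neq0.
have e_unit : diag_mx (\row_i e i) \in unitmx by apply: diag_mx_unit => i; rewrite mxE.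
apply: (char_poly_similar e_unit).
rewrite /norm_signed_laplacian /sDelta invmx_diag // mulmxBr mulmxBl mulmx1 mul1mx.
congr (_ - _); apply/matrixP => i j.
rewrite !mul_diag_mx mul_mx_diag !mxE -e_sq.
by field; rewrite !e_nz.
Qed.

Section RealSymmetricSpectrum.
Variables (R : realType) (n : nat) (M : 'M[R]_n).
Hypothesis Msym : M^T = M.

Local Notation rc := (real_complex R).
Local Notation Mc := (map_mx rc M).
Local Notation P := (spectralmx Mc).
Local Notation d := (spectral_diag Mc).

(* The eigenvalues of M (real parts of the complex spectrum, which is real). *)
Definition sym_eigenvalue (k : 'I_n) : R := complex.Re (d 0 k).

(* Coordinates of a real vector in the orthonormal eigenbasis (rows of P). *)
Definition eigen_coord (y : 'rV[R]_n) : 'rV[R[i]]_n := map_mx rc y *m invmx P.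

Let conj_rc x : (rc x)^* = rc x.
Proof. by rewrite conj_Creal //; apply/complex_realP; exists x. Qed.

Let Mc_herm : Mc \is hermsymmx.
Proof.
apply/is_hermitianmxP; rewrite expr0 scale1r.
by apply/matrixP => i j; rewrite !mxE conj_rc -[in RHS]Msym mxE.
Qed.

Let P_unitary : P \is unitarymx. Proof. exact: spectral_unitarymx. Qed.
Let P_unit : P \in unitmx. Proof. exact: unitarymx_unit. Qed.

Let Mc_spectral : Mc = invmx P *m diag_mx d *m P.
Proof. exact/orthomx_spectralP/hermitian_normalmx. Qed.

Lemma sym_eigenvalueE k : rc (sym_eigenvalue k) = d 0 k.
Proof.
apply: RRe_real.
by have /mxOverP := hermitian_spectral_diag_real Mc_herm; apply.
Qed.

Lemma char_poly_sym : char_poly M = \prod_(k < n) ('X - (sym_eigenvalue k)%:P).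
Proof.
apply: (@map_poly_inj _ _ rc); rewrite map_char_poly.
rewrite (@char_poly_similar _ _ P _ (diag_mx d) P_unit); last first.
  by rewrite [X in _ *m X = _]Mc_spectral !mulmxA mulmxV // mul1mx.
rewrite char_poly_diag rmorph_prod; apply: eq_bigr => k _.
by rewrite rmorphB /= map_polyX map_polyC /= sym_eigenvalueE.
Qed.

Lemma eigen_coordE y k : eigen_coord y 0 k = \sum_j rc (y 0 j) * (P k j)^*.
Proof. by rewrite mxE invmx_unitary //; apply: eq_bigr => j _; rewrite !mxE. Qed.

Lemma quad_form_eigen y :
  rc ((y *m (1%:M - M) *m y^T) 0 0) =
  \sum_k eigen_coord y 0 k * rc (1 - sym_eigenvalue k) * (eigen_coord y 0 k)^*.
Proof.
have shifted : 1%:M - Mc = invmx P *m diag_mx (\row_k (1 - d 0 k)) *m P.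
  have -> : diag_mx (\row_k (1 - d 0 k)) = 1%:M - diag_mx d.
    apply/matrixP => i j; rewrite !mxE.
    by case: eqP => _; rewrite ?mulr1n ?mulr0n ?subr0.
  by rewrite [in LHS]Mc_spectral mulmxBr mulmxBl mulmx1 mulVmx.
have -> : rc ((y *m (1%:M - M) *m y^T) 0 0) =
    (map_mx rc (y *m (1%:M - M) *m y^T)) 0 0 by rewrite [RHS]mxE.
rewrite !map_mxM map_mxB map_mx1 -map_trmx shifted.
rewrite !mulmxA -(mulmxA _ P) mul_mx_diag mxE.
have rc_shift k : rc (1 - sym_eigenvalue k) = 1 - d 0 k.
  by rewrite -sym_eigenvalueE rmorphB rmorph1.
apply: eq_bigr => k _; rewrite !mxE rc_shift; congr (_ * _).
rewrite invmx_unitary // rmorph_sum; apply: eq_bigr => j _.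
by rewrite !mxE rmorphM /= conj_rc conjCK mulrC.
Qed.

Lemma eigen_term_le0 y k : 1 <= sym_eigenvalue k ->
  eigen_coord y 0 k * rc (1 - sym_eigenvalue k) * (eigen_coord y 0 k)^* <= 0.
Proof.
move=> ge1; rewrite mulrAC mulrC mulr_le0_ge0 ?mul_conjC_ge0 //.
by rewrite -(rmorph0 rc) lecR subr_le0.
Qed.

Section SimpleEigenvalue.
Variables (k0 : 'I_n) (v : 'rV[R]_n).
Hypothesis simple : forall k, k != k0 -> sym_eigenvalue k != sym_eigenvalue k0.
Hypothesis v_eigen : v *m M = sym_eigenvalue k0 *: v.
Hypothesis v_nz : v != 0.

Lemma eigen_coord_simple k : k != k0 -> eigen_coord v 0 k = 0.
Proof.
move=> kk0.
have coord_diag : eigen_coord v *m diag_mx d = d 0 k0 *: eigen_coord v.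
  have -> : diag_mx d = P *m (Mc *m invmx P).
    by rewrite [X in _ = _ *m (X *m _)]Mc_spectral !mulmxA mulmxV // mul1mx mulmxK.
  rewrite /eigen_coord !mulmxA mulmxKV // -map_mxM v_eigen map_mxZ /=.
  by rewrite sym_eigenvalueE scalemxAl.
have := congr1 (fun X : 'rV_n => X 0 k) coord_diag.
rewrite mul_mx_diag !mxE mulrC => /eqP; rewrite -subr_eq0 -mulrBl mulf_eq0.
case/orP => [|/eqP //]; rewrite subr_eq0 -!sym_eigenvalueE.
by rewrite (inj_eq (fmorph_inj _)) (negPf (simple kk0)).
Qed.

Lemma eigenvector_row : map_mx rc v = eigen_coord v 0 k0 *: row k0 P.
Proof.
have -> : map_mx rc v = eigen_coord v *m P by rewrite /eigen_coord mulmxKV.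
set al := eigen_coord v 0 k0.
apply/rowP => j; rewrite !mxE (bigD1 k0) //= big1 ?addr0 // => k kk0.
by rewrite eigen_coord_simple // mul0r.
Qed.

Lemma eigen_coord_simple_neq0 : eigen_coord v 0 k0 != 0.
Proof.
apply: contraNneq v_nz => al0.
by rewrite -(map_mx_eq0 rc) eigenvector_row al0 scale0r.
Qed.

Lemma eigen_coord_dot y :
  rc ((v *m y^T) 0 0) = (eigen_coord v 0 k0)^* * eigen_coord y 0 k0.
Proof.
have := eigenvector_row; set al := eigen_coord v 0 k0 => v_row.
rewrite (eigen_coordE y) mulr_sumr mxE rmorph_sum; apply: eq_bigr => j _.
have := congr1 (fun X : 'rV_n => X 0 j) v_row; rewrite !mxE => vj.
by rewrite rmorphM /= -[rc (v 0 j)]conj_rc vj rmorphM mulrAC -mulrA.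
Qed.

Lemma quad_form_rank_one : (forall k, k != k0 -> 1 <= sym_eigenvalue k) ->
  exists c : R, forall y : 'rV[R]_n,
    (y *m (1%:M - M) *m y^T) 0 0 <= c * ((v *m y^T) 0 0) ^+ 2.
Proof.
move=> others.
have al0 := eigen_coord_simple_neq0.
have alc0 : (eigen_coord v 0 k0)^* != 0 by rewrite conjC_eq0.
have dot := eigen_coord_dot.
set al := eigen_coord v 0 k0 in al0 alc0 dot.
have rc_norm : rc (complex.Re (al * al^*)) = al * al^*.
  by rewrite RRe_real // ger0_real // mul_conjC_ge0.
exists ((1 - sym_eigenvalue k0) / complex.Re (al * al^*)) => y.
rewrite -lecR quad_form_eigen (bigD1 k0) //=.
apply: ler_wnDr; first by apply: sumr_le0 => k kk0; apply: eigen_term_le0; apply: others.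
rewrite expr2 !rmorphM fmorphV /= rc_norm.
rewrite -[X in _ <= _ * (_ * X)]conj_rc dot [(_ * eigen_coord y 0 k0)^*]rmorphM /= conjCK.
rewrite le_eqVlt; apply/orP; left; apply/eqP.
by field; rewrite al0 alc0.
Qed.

End SimpleEigenvalue.

Lemma sym_quad_form_bound :
  (forall k k', sym_eigenvalue k < 1 -> sym_eigenvalue k' < 1 -> k = k') ->
  exists (c : R) (s : 'rV[R]_n), forall y : 'rV[R]_n,
    (y *m (1%:M - M) *m y^T) 0 0 <= c * ((s *m y^T) 0 0) ^+ 2.
Proof.
move=> at_most_one.
case: (pickP (fun k => sym_eigenvalue k < 1)) => [k0 lt1 | none]; last first.
  exists 0, 0 => y; rewrite mul0r -lecR rmorph0 quad_form_eigen.
  by apply: sumr_le0 => k _; apply: eigen_term_le0; rewrite leNgt none.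
have others k : k != k0 -> 1 <= sym_eigenvalue k.
  move=> kk0; rewrite leNgt; apply: contra kk0 => lt1k.
  by apply/eqP/at_most_one.
have simple k : k != k0 -> sym_eigenvalue k != sym_eigenvalue k0.
  by move=> kk0; rewrite gt_eqF // (lt_le_trans lt1 (others k kk0)).
have : eigenvalue M (sym_eigenvalue k0).
  rewrite eigenvalue_root_char char_poly_sym.
  by rewrite (bigD1 k0) //= rootM root_XsubC eqxx.
case/eigenvalueP => v v_eigen v_nz.
have [c bound] := quad_form_rank_one simple v_eigen v_nz others.
by exists c, v.
Qed.

End RealSymmetricSpectrum.

Lemma sorted_spectrum_sort (R : realType) n (M : 'M[R]_n) (r : 'I_n -> R) :
  char_poly M = \prod_(k < n) ('X - (r k)%:P) ->
  sorted_spectrum M (sort <=%R [seq r k | k <- enum 'I_n]).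
Proof.
move=> char_M; split; first exact: sort_le_sorted.
by rewrite char_M (perm_big _ (permEl (perm_sort _ _))) big_map big_enum.
Qed.

Lemma count_below_sorted (R : realDomainType) (s : seq R) :
  sorted <=%R s -> 1 <= s`_1 -> (count (fun x => (x < 1)%R) s <= 1)%N.
Proof.
case: s => [|a [|b t]] //=; first by rewrite addn0 leq_b1.
case/andP => _ sorted_bt b_ge1.
have /allP t_ge_b := order_path_min le_trans sorted_bt.
have -> : count (fun x => (x < 1)%R) t = 0%N.
  apply/eqP; rewrite -leqn0 leqNgt -has_count; apply/hasPn => x /t_ge_b b_le_x.
  by rewrite -leNgt (le_trans b_ge1 b_le_x).
by rewrite (ltNge b) b_ge1; case: (a < 1)%R.
Qed.

Lemma unique_below_one (R : realDomainType) n (r : 'I_n -> R) :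
  1 <= (sort <=%R [seq r k | k <- enum 'I_n])`_1 ->
  forall k k', r k < 1 -> r k' < 1 -> k = k'.
Proof.
move=> ge1 k k' lt1 lt1'.
have := count_below_sorted (sort_le_sorted _) ge1.
rewrite (permP (permEl (perm_sort _ _))) count_map.
have -> : count (preim r (fun x => x < 1)) (enum 'I_n) = #|[pred j | r j < 1]|.
  rewrite cardE -size_filter; congr size.
  by rewrite /enum_mem -filter_predI; apply: eq_filter => x; rewrite /= andbT.
by move/card_le1_eqP; apply.
Qed.

Theorem lemma2 (R : realType) (n : nat) (A : 'M[R]_n)
  (Asym : A^T = A)
  (Adiag : forall i, A i i = 0)
  (Adeg : forall i, 0 < sdeg A i)
  (Aconn : sg_connected A)
  (Aunbal : ~ struct_balanced A) :
  exists s : seq R,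
    sorted_spectrum (norm_signed_laplacian A) s /\ s`_1 < 1.
Proof.
pose e i := Num.sqrt (sdeg A i).
have e_pos i : 0 < e i by rewrite sqrtr_gt0.
have e_sq i : e i ^+ 2 = sdeg A i by rewrite sqr_sqrtr // ltW.
have A_swap i j : A j i = A i j by rewrite -[in LHS]Asym mxE.
pose M := 1%:M - sym_normalized A e.
have Msym : M^T = M.
  by apply/matrixP => i j; rewrite !mxE (A_swap i j) eq_sym [e j * _]mulrC.
have char_L := laplacian_similar (fun i => lt0r_neq0 (e_pos i)) e_sq.
have [sorted_s char_s] := sorted_spectrum_sort (char_poly_sym Msym).
exists (sort <=%R [seq sym_eigenvalue M k | k <- enum 'I_n]).
split; first by split; rewrite // char_L.
rewrite ltNge; apply/negP => ge1; apply: Aunbal.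
have [c [v bound]] := sym_quad_form_bound Msym (unique_below_one ge1).
apply: (balanced_of_rank_one_bound Asym Adiag e_pos (c := c) (s := v)) => y.
by have := bound y; rewrite /M opprB addrC subrK.
Qed.
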